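(* Let $d\ge 1$. There is a unique map $\operatorname{vol}^\otimes_d$ from the set of multirectangles in $\mathbb{R}^d$ to $\mathbb{R}^{\otimes d}$ that is additive under disjoint unions and maps each rectangle $\prod_{i=1}^d[a_i,a_i+t_i)$ (with $t_i>0$) to $t_1\otimes\cdots\otimes t_d$.
   Context: A rectangle in $\mathbb{R}^d$ is a set $\prod_{i=1}^d[a_i,b_i)$ with $a_i<b_i$ real. A multirectangle is a finite union of rectangles (the empty set included). $\mathbb{R}^{\otimes d}$ denotes the $d$-th tensor power of $\mathbb{R}$ over $\mathbb{Q}$. *)

From HB Require Import structures.
From mathcomp Require Import all_boot all_order all_algebra.
From mathcomp Require Import boolp classical_sets reals.
Set Implicit Arguments. Unset Strict Implicit. Unset Printing Implicit Defensive.
Import Order.TTheory GRing.Theory Num.Theory.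
Local Open Scope ring_scope.
Local Open Scope classical_set_scope.

Definition rect (R : realType) (d : nat) (a b : 'I_d -> R) : set ('I_d -> R) :=
  [set x | forall i, a i <= x i /\ x i < b i].

Definition multirect (R : realType) (d : nat) (A : set ('I_d -> R)) : Prop :=
  exists s : seq (('I_d -> R) * ('I_d -> R)),
    (forall p, p \in s -> forall i, p.1 i < p.2 i) /\
    A = \big[setU/set0]_(p <- s) rect p.1 p.2.

Definition upd (R : Type) (d : nat) (t : 'I_d -> R) (i : 'I_d) (v : R) : 'I_d -> R :=
  fun j => if j == i then v else t j.

Definition qlinear (V W : lmodType rat) (g : V -> W) : Prop :=
  forall (q : rat) (u v : V), g (q *: u + v) = q *: g u + g v.

Definition qmultilinear (R : realType) (d : nat) (W : lmodType rat)
    (f : ('I_d -> R) -> W) : Prop :=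
  forall (t : 'I_d -> R) (i : 'I_d) (q : rat) (u v : R),
    f (upd t i (ratr q * u + v)) = q *: f (upd t i u) + f (upd t i v).

(* (V, tens) is the d-th tensor power of R over Q, characterised by its
   universal property: tens is Q-multilinear, and every Q-multilinear map
   out of R^d factors uniquely through a Q-linear map V -> W. *)
Definition is_tensor_power (R : realType) (d : nat) (V : lmodType rat)
    (tens : ('I_d -> R) -> V) : Prop :=
  qmultilinear tens /\
  forall (W : lmodType rat) (f : ('I_d -> R) -> W), qmultilinear f ->
    exists g : V -> W, [/\ qlinear g, (forall t, g (tens t) = f t) &
      forall g' : V -> W, qlinear g' -> (forall t, g' (tens t) = f t) ->
        forall v, g' v = g v].

Definition vol_additive (R : realType) (d : nat) (V : lmodType rat)
    (vol : set ('I_d -> R) -> V) : Prop :=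
  forall A B, multirect A -> multirect B -> A `&` B = set0 ->
    vol (A `|` B) = vol A + vol B.

Definition vol_normalized (R : realType) (d : nat) (V : lmodType rat)
    (tens : ('I_d -> R) -> V) (vol : set ('I_d -> R) -> V) : Prop :=
  forall a t : 'I_d -> R, (forall i, 0 < t i) ->
    vol (rect a (fun i => a i + t i)) = tens t.

From HB Require Import structures.
From mathcomp Require Import all_boot all_order all_algebra.
From mathcomp Require Import boolp classical_sets reals fsbigop topology.
From mathcomp Require Import lra.
Set Implicit Arguments. Unset Strict Implicit. Unset Printing Implicit Defensive.
Import Order.TTheory GRing.Theory Num.Theory.
Local Open Scope ring_scope.
Local Open Scope classical_set_scope.

(* For a multirectangle A and a point x, let w_A(x) be the d-fold mixed
   difference of the values of the indicator of A just below x, approached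
   along every subset of the coordinate directions.  w_A is additive under
   disjoint unions and vanishes unless every coordinate of x is an endpoint of
   one of the rectangles of A, so vol A := sum_x w_A(x) x_1 (x) ... (x) x_d is a
   finite sum and vol is additive.  For a rectangle prod [a_i, b_i), w(x) is the
   product of the signs +1 at x_i = b_i and -1 at x_i = a_i, and multilinearity
   collapses the sum over the 2^d corners to (b_1 - a_1) (x) ... (x) (b_d - a_d).
   For uniqueness, multirectangles are closed under intersection and difference,
   so an additive function satisfies inclusion-exclusion; as a rectangle meets a
   union of n rectangles in a union of n rectangles, induction on n reduces to
   the normalisation. *)

Section Germs.
Variable R : realType.

Definition germ (Q : R -> Prop) : bool := `[< \forall t \near 0^'+, Q t >].

Lemma germE (Q : R -> Prop) (b : bool) :
  (\forall t \near 0^'+, Q t <-> b) -> germ Q = b.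
Proof.
case: b => Qb; [apply/asboolP | apply/negbTE/asboolP => Q0].
  by apply: filterS Qb => t [_]; apply.
near (0 : R)^'+ => t.
have Qtb : Q t <-> false by near: t.
have Qt : Q t by near: t.
by have := proj1 Qtb Qt.
Unshelve. all: by end_near.
Qed.

Lemma near_itv_below (a b y : R) :
  \forall t \near 0^'+, (a <= y - t /\ y - t < b) <-> y \in `]a, b]%R.
Proof.
rewrite in_itv /=; have [ay|ya] := ltP a y; last first.
  near=> t; have : 0 < t by near: t; apply: nbhs_right_gt.
  by split=> // -[]; lra.
have [yb|bly] := leP y b; near=> t.
  have : 0 < t by near: t; apply: nbhs_right_gt.
  have : t < y - a by near: t; apply: nbhs_right_lt; rewrite subr_gt0.
  by split=> // _; split; lra.
have : t < y - b by near: t; apply: nbhs_right_lt; rewrite subr_gt0.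
by split=> // -[]; lra.
Unshelve. all: by end_near.
Qed.
End Germs.

Section Upd.
Variables (T : Type) (d : nat).
Implicit Types (t : 'I_d -> T) (i j : 'I_d) (u v : T).

Lemma upd_same t i v : upd t i v i = v.
Proof. by rewrite /upd eqxx. Qed.

Lemma upd_other t i j v : j != i -> upd t i v j = t j.
Proof. by rewrite /upd => /negbTE ->. Qed.

Lemma upd_upd t i u v : upd (upd t i u) i v = upd t i v.
Proof. by apply: funext => j; rewrite /upd; case: eqP. Qed.

Lemma updC t i j u v : j != i -> upd (upd t i u) j v = upd (upd t j v) i u.
Proof.
move=> ji; apply: funext => k; rewrite /upd.
by case: eqP => // ->; rewrite (negbTE ji).
Qed.
End Upd.

Section MixedDifference.
Variable d : nat.
Implicit Types (i : 'I_d) (l : seq 'I_d) (e : 'I_d -> bool).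

Fixpoint mixed_diff (M : zmodType) (g : ('I_d -> bool) -> M) l e : M :=
  if l is i :: l' then mixed_diff g l' (upd e i true) - mixed_diff g l' (upd e i false)
  else g e.

Lemma mixed_diffD (M : zmodType) (g1 g2 : ('I_d -> bool) -> M) l e :
  mixed_diff (fun e => g1 e + g2 e) l e = mixed_diff g1 l e + mixed_diff g2 l e.
Proof. by elim: l e => //= i l IHl e; rewrite !IHl opprD addrACA. Qed.

Section ConstantCoordinate.
Variables (M : zmodType) (g : ('I_d -> bool) -> M) (i : 'I_d).
Hypothesis g_const : forall e c, g (upd e i c) = g e.

Lemma mixed_diff_upd l e c : mixed_diff g l (upd e i c) = mixed_diff g l e.
Proof.
elim: l e => [|j l IHl] e /=; first exact: g_const.
have [->|ji] := eqVneq j i; first by rewrite !upd_upd.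
by rewrite !(updC _ _ _ ji) !IHl.
Qed.

Lemma mixed_diff_eq0 l e : i \in l -> mixed_diff g l e = 0.
Proof.
elim: l e => [|j l IHl] e //=; rewrite inE => /orP[/eqP <-|il].
  by rewrite !mixed_diff_upd subrr.
by rewrite !IHl // subrr.
Qed.
End ConstantCoordinate.

Lemma mixed_diff_prod (K : comNzRingType) (h : 'I_d -> bool -> K) l e : uniq l ->
  mixed_diff (fun e => \prod_j h j (e j)) l e =
  \prod_j (if j \in l then h j true - h j false else h j (e j)).
Proof.
elim: l e => [|i l IHl] e; first by move=> _; apply: eq_bigr.
case/andP=> il ul; rewrite [LHS]/= !IHl //.
rewrite [X in X - _](bigD1 i) // [X in _ - X](bigD1 i) // [RHS](bigD1 i) //=.
rewrite (negbTE il) mem_head !upd_same.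
have others c : \prod_(j | j != i) (if j \in l then h j true - h j false
                                     else h j (upd e i c j)) =
                \prod_(j | j != i) (if j \in i :: l then h j true - h j false
                                     else h j (e j)).
  by apply: eq_bigr => j ji; rewrite inE (negbTE ji) upd_other.
by rewrite !others -mulrBl.
Qed.
End MixedDifference.

Lemma natr_forall (K : comNzRingType) (I : finType) (P : pred I) :
  ([forall i, P i] : nat)%:R = \prod_i (P i : nat)%:R :> K.
Proof.
have [/forallP PI|/forallPn[i /negbTE Pi]] := boolP [forall i, P i].
  by rewrite big1 // => i _; rewrite PI.
by rewrite (bigD1 i) //= Pi mul0r.
Qed.

Section CornerWeight.
Variables (R : realType) (d : nat).
Notation P := ('I_d -> R).
Implicit Types (a b x : P) (s : seq (P * P)) (e : 'I_d -> bool).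

Definition rects s : set P := \big[setU/set0]_(p <- s) rect p.1 p.2.

Lemma rects_nil : rects [::] = set0.
Proof. by rewrite /rects big_nil. Qed.

Lemma rects_cons p s : rects (p :: s) = rect p.1 p.2 `|` rects s.
Proof. by rewrite /rects big_cons. Qed.

Lemma rects_cat s t : rects (s ++ t) = rects s `|` rects t.
Proof. by rewrite /rects big_cat. Qed.

Definition shift x e (t : R) : P := fun i => if e i then x i - t else x i.

(* the y such that y - t c lies in [a, b[ for all small t > 0 *)
Definition itv_below (c : bool) (a b : R) : interval R :=
  if c then `]a, b]%R else `[a, b[%R.

Lemma mem_itv_below_open (c : bool) (a b y : R) : y != a -> y != b ->
  (y \in itv_below c a b) = (a < y < b).
Proof.
move=> ya yb; case: c; rewrite in_itv /=; first by rewrite le_eqVlt (negbTE yb).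
by rewrite le_eqVlt eq_sym (negbTE ya).
Qed.

Definition rect_germ a b x e : bool :=
  [forall i, x i \in itv_below (e i) (a i) (b i)].

Lemma near_rect_shift a b x e :
  \forall t \near 0^'+, rect a b (shift x e t) <-> rect_germ a b x e.
Proof.
have coord : \forall t \near 0^'+, forall i,
    (a i <= shift x e t i /\ shift x e t i < b i) <->
    x i \in itv_below (e i) (a i) (b i).
  apply: filter_forall => i; rewrite /shift /itv_below.
  case: (e i); first exact: near_itv_below.
  by apply: nearW => t; rewrite in_itv /=; split=> [[-> ->]|/andP[]].
apply: filterS coord => t coord; split=> [rectx|/forallP germx i].
  by apply/forallP => i; apply/coord/rectx.
exact/coord/germx.
Qed.

Lemma near_rects_shift s x e :
  \forall t \near 0^'+, rects s (shift x e t) <-> has (fun p => rect_germ p.1 p.2 x e) s.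
Proof.
elim: s => [|p s IHs]; first by apply: nearW => t; rewrite rects_nil.
near=> t; rewrite rects_cons /=.
have germp : rect p.1 p.2 (shift x e t) <-> rect_germ p.1 p.2 x e.
  by near: t; exact: near_rect_shift.
have germs : rects s (shift x e t) <-> has (fun p => rect_germ p.1 p.2 x e) s.
  by near: t.
split=> [[/germp ->|/germs ->]|/orP[/germp rp|/germs rs]]; by [|rewrite orbT|left|right].
Unshelve. all: by end_near.
Qed.

Definition ind_germ (A : set P) x e : rat := (germ (fun t => A (shift x e t)) : nat)%:R.

Lemma ind_germ_rect a b x e :
  ind_germ (rect a b) x e = \prod_i (x i \in itv_below (e i) (a i) (b i) : nat)%:R.
Proof. by rewrite /ind_germ (germE (near_rect_shift a b x e)) natr_forall. Qed.

Lemma ind_germ_rects s x e :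
  ind_germ (rects s) x e = (has (fun p => rect_germ p.1 p.2 x e) s : nat)%:R.
Proof. by rewrite /ind_germ (germE (near_rects_shift s x e)). Qed.

Lemma ind_germ_setU s t x e : rects s `&` rects t = set0 ->
  ind_germ (rects s `|` rects t) x e = ind_germ (rects s) x e + ind_germ (rects t) x e.
Proof.
move=> st0; rewrite -rects_cat !ind_germ_rects has_cat.
case: (has _ s) (near_rects_shift s x e) => germs; rewrite ?add0r //.
case: (has _ t) (near_rects_shift t x e) => germt; rewrite ?addr0 //.
near (0 : R)^'+ => u.
have : (rects s `&` rects t) (shift x e u).
  by split; [apply/(near germs u)|apply/(near germt u)].
by rewrite st0.
Unshelve. all: by end_near.
Qed.

Definition corner_weight (A : set P) x : rat :=
  mixed_diff (ind_germ A x) (enum 'I_d) (fun=> false).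

Definition edge_sign (a b y : R) : rat :=
  (y \in itv_below true a b : nat)%:R - (y \in itv_below false a b : nat)%:R.

Lemma edge_sign_right (a b : R) : a < b -> edge_sign a b b = 1.
Proof. by move=> ab; rewrite /edge_sign !in_itv /= ab lexx ltxx andbF subr0. Qed.

Lemma edge_sign_left (a b : R) : a < b -> edge_sign a b a = -1.
Proof. by move=> ab; rewrite /edge_sign !in_itv /= ab lexx ltxx sub0r. Qed.

Lemma edge_sign_eq0 (a b y : R) : y != a -> y != b -> edge_sign a b y = 0.
Proof. by move=> ya yb; rewrite /edge_sign !mem_itv_below_open // subrr. Qed.

Lemma corner_weight_rect a b x :
  corner_weight (rect a b) x = \prod_i edge_sign (a i) (b i) (x i).
Proof.
rewrite /corner_weight (_ : ind_germ _ x = fun e =>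
    \prod_i (x i \in itv_below (e i) (a i) (b i) : nat)%:R); last first.
  by apply: funext => e; apply: ind_germ_rect.
rewrite (mixed_diff_prod (fun i c => (x i \in itv_below c (a i) (b i) : nat)%:R))
  ?enum_uniq //.
by apply: eq_bigr => i _; rewrite mem_enum.
Qed.

Lemma corner_weight_setU s t x : rects s `&` rects t = set0 ->
  corner_weight (rects s `|` rects t) x =
  corner_weight (rects s) x + corner_weight (rects t) x.
Proof.
move=> st0; rewrite /corner_weight -mixed_diffD; congr mixed_diff.
by apply: funext => e; apply: ind_germ_setU.
Qed.

Definition endpoints s : seq R := flatten [seq codom p.1 ++ codom p.2 | p <- s].

Lemma corner_weight_eq0 s x i :
  x i \notin endpoints s -> corner_weight (rects s) x = 0.
Proof.
move=> xi_end; apply: (@mixed_diff_eq0 _ _ _ i); last by rewrite mem_enum.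
move=> e c; rewrite !ind_germ_rects; congr (nat_of_bool _)%:R.
apply: eq_in_has => p ps; apply: eq_forallb => j.
have [->|ji] := eqVneq j i; last by rewrite upd_other.
have endp (y : R) : y \in codom p.1 ++ codom p.2 -> x i != y.
  move=> yp; apply: contraNneq xi_end => ->; apply/flattenP.
  by exists (codom p.1 ++ codom p.2) => //; exact: (map_f _ ps).
by rewrite !mem_itv_below_open // endp // mem_cat codom_f ?orbT.
Qed.

Definition grid (E : seq R) : seq P :=
  undup [seq (fun i => nth 0 E (k i)) |
         k : {ffun 'I_d -> 'I_(size E)} <- enum {ffun 'I_d -> 'I_(size E)}].

Lemma grid_uniq (E : seq R) : uniq (grid E).
Proof. exact: undup_uniq. Qed.

Lemma mem_grid (E : seq R) x : (forall i, x i \in E) -> x \in grid E.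
Proof.
move=> xE; have xk i : (index (x i) E < size E)%N by rewrite index_mem.
rewrite mem_undup; apply/mapP; exists [ffun i => Ordinal (xk i)].
  by rewrite mem_enum.
by apply: funext => i; rewrite ffunE /= nth_index.
Qed.

Lemma corner_weight_supp s (E : seq R) x : {subset endpoints s <= E} ->
  corner_weight (rects s) x != 0 -> x \in grid E.
Proof.
move=> sE wx; apply: mem_grid => i; apply: sE; apply: contraNT wx => xi.
by rewrite (corner_weight_eq0 xi).
Qed.

End CornerWeight.

Section Corners.
Variables (R : realType) (d : nat).
Notation P := ('I_d -> R).
Implicit Types (a b x z : P) (l : seq 'I_d).

Fixpoint corners a b l z : seq P :=
  if l is i :: l' then corners a b l' (upd z i (b i)) ++ corners a b l' (upd z i (a i))
  else [:: z].

Lemma corners_notin a b l z x j : x \in corners a b l z -> j \notin l -> x j = z j.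
Proof.
elim: l z => [|i l IHl] z /=; first by rewrite inE => /eqP ->.
rewrite inE negb_or mem_cat => /orP[] /IHl xz /andP[ji jl];
  by rewrite xz // upd_other.
Qed.

Lemma uniq_corners a b l z : (forall j, a j != b j) -> uniq l -> uniq (corners a b l z).
Proof.
move=> ab; elim: l z => [|i l IHl] z //= /andP[il ul].
rewrite cat_uniq !IHl //= andbT; apply/hasPn => x xa; apply/negP => xb.
have := corners_notin xb il; rewrite (corners_notin xa il) !upd_same => abi.
by move: (ab i); rewrite abi eqxx.
Qed.

Lemma mem_corners a b l z x : (forall j, j \in l -> x j = a j \/ x j = b j) ->
  (forall j, j \notin l -> x j = z j) -> x \in corners a b l z.
Proof.
elim: l z => [|i l IHl] z /= xab xz.
  by rewrite inE; apply/eqP; apply: funext => j; apply: xz.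
have xab' j : j \in l -> x j = a j \/ x j = b j.
  by move=> jl; apply: xab; rewrite inE jl orbT.
have xz' c : x i = c -> forall j, j \notin l -> x j = upd z i c j.
  move=> xi j jl; have [->|ji] := eqVneq j i; first by rewrite upd_same.
  by rewrite upd_other // xz // inE negb_or ji.
rewrite mem_cat; case: (xab i (mem_head _ _)) => /xz' xi; apply/orP;
  [right|left]; exact: IHl xab' xi.
Qed.

Lemma qmultilinear_corners (V : lmodType rat) (f : P -> V) a b l z :
  qmultilinear f -> (forall j, a j < b j) -> uniq l ->
  \sum_(x <- corners a b l z) (\prod_(j <- l) edge_sign (a j) (b j) (x j)) *: f x =
  f (fun j => if j \in l then b j - a j else z j).
Proof.
move=> f_ml ab; elim: l z => [|i l IHl] z /=.
  by move=> _; rewrite big_seq1 big_nil scale1r.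
case/andP=> il ul; rewrite big_cat /=.
rewrite (eq_big_seq (fun x => (\prod_(j <- l) edge_sign (a j) (b j) (x j)) *: f x));
  last first.
  move=> x xC; rewrite big_cons (corners_notin xC il) upd_same.
  by rewrite edge_sign_right // mul1r.
rewrite [X in _ + X](eq_big_seq
  (fun x => - ((\prod_(j <- l) edge_sign (a j) (b j) (x j)) *: f x))); last first.
  move=> x xC; rewrite big_cons (corners_notin xC il) upd_same.
  by rewrite edge_sign_left // mulN1r scaleNr.
rewrite sumrN !IHl //.
set w := fun j => if j \in l then b j - a j else z j.
have updw c : (fun j => if j \in l then b j - a j else upd z i c j) = upd w i c.
  by apply: funext => j; rewrite /upd /w; case: eqP => // ->; rewrite (negbTE il).
have -> : (fun j => if j \in i :: l then b j - a j else z j) =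
          upd w i (ratr (-1) * a i + b i).
  apply: funext => j; rewrite /upd /w inE rmorphN1 mulN1r.
  by case: eqP => [->|_] /=; first rewrite addrC.
by rewrite !updw f_ml scaleN1r addrC.
Qed.
End Corners.

Section Volume.
Variables (R : realType) (d : nat) (V : lmodType rat) (tens : ('I_d -> R) -> V).
Notation P := ('I_d -> R).

Definition vol (A : set P) : V := \sum_(x \in [set: P]) corner_weight A x *: tens x.

Lemma volE (A : set P) (r : seq P) : uniq r ->
  (forall x, corner_weight A x != 0 -> x \in r) ->
  vol A = \sum_(x <- r) corner_weight A x *: tens x.
Proof.
move=> ur supp; rewrite fsbig_seq // /vol; apply/esym/fsbig_widen => // x [_ /= xr].
apply/eqP; apply: contra_notT xr => Fx; apply: supp.
by apply: contraNneq Fx => ->; rewrite scale0r.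
Qed.

Lemma additive_vol : vol_additive vol.
Proof.
move=> _ _ [s [_ ->]] [t [_ ->]]; rewrite -/(rects s) -/(rects t) => st0.
set r := grid d (endpoints s ++ endpoints t).
have supp_s x : corner_weight (rects s) x != 0 -> x \in r.
  by apply: corner_weight_supp => y ys; rewrite mem_cat ys.
have supp_t x : corner_weight (rects t) x != 0 -> x \in r.
  by apply: corner_weight_supp => y yt; rewrite mem_cat yt orbT.
have ur : uniq r := grid_uniq _ _.
rewrite (volE ur supp_s) (volE ur supp_t) (volE ur); last first.
  move=> x; rewrite corner_weight_setU //.
  have [->|/supp_s //] := eqVneq (corner_weight (rects s) x) 0.
  by rewrite add0r => /supp_t.
by rewrite -big_split; apply: eq_bigr => x _; rewrite corner_weight_setU // scalerDl.
Qed.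

Lemma vol_rect (a b : P) : qmultilinear tens -> (forall i, a i < b i) ->
  vol (rect a b) = tens (fun i => b i - a i).
Proof.
move=> tens_ml ab; have ab' j : a j != b j by rewrite lt_eqF.
rewrite (@volE _ (corners a b (enum 'I_d) a)); last first.
- move=> x; rewrite corner_weight_rect => wx.
  apply: mem_corners => [j _|j]; last by rewrite mem_enum.
  have [|xa] := eqVneq (x j) (a j); first by left.
  have [|xb] := eqVneq (x j) (b j); first by right.
  by move: wx; rewrite (bigD1 j) //= edge_sign_eq0 // mul0r eqxx.
- exact: uniq_corners (enum_uniq _).
rewrite (eq_bigr (fun x =>
    (\prod_(j <- enum 'I_d) edge_sign (a j) (b j) (x j)) *: tens x)); last first.
  by move=> x _; rewrite corner_weight_rect big_enum.
rewrite qmultilinear_corners ?enum_uniq //; congr tens; apply: funext => j.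
by rewrite mem_enum.
Qed.
End Volume.

Section Uniqueness.
Variables (R : realType) (d : nat).
Notation P := ('I_d -> R).
Implicit Types (a b : P) (p q : P * P) (s t : seq (P * P)) (A B : set P).

Lemma rect_eq0 a b : ~~ [forall i, a i < b i] -> rect a b = set0.
Proof.
move=> /forallPn[i abi]; apply/seteqP; split=> // x /(_ i) [axi xbi].
by move: abi; rewrite (le_lt_trans axi xbi).
Qed.

Lemma multirectP A : multirect A <-> exists s, A = rects s.
Proof.
split=> [[s [_ ->]]|[s ->]]; first by exists s.
exists [seq p <- s | [forall i, p.1 i < p.2 i]]; split.
  by move=> p; rewrite mem_filter => /andP[/forallP].
elim: s => [|p s IHs] /=; first by rewrite rects_nil big_nil.
rewrite rects_cons IHs; case: ifPn => [_|/rect_eq0 ->]; first by rewrite big_cons.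
by rewrite set0U.
Qed.

Lemma rectI a b a' b' : rect a b `&` rect a' b' = rect (a \max a') (b \min b').
Proof.
apply/seteqP; split=> x.
  move=> [r r'] i; case: (r i) (r' i) => [ax xb] [ax' xb'].
  by rewrite ge_max lt_min ax ax' xb xb'.
move=> r; split=> i; case: (r i); rewrite ge_max lt_min => /andP[? ?] /andP[? ?] //.
Qed.

Lemma rect_setI_rects p t :
  rect p.1 p.2 `&` rects t = rects [seq (p.1 \max q.1, p.2 \min q.2) | q <- t].
Proof.
elim: t => [|q t IHt] /=; first by rewrite !rects_nil setI0.
by rewrite !rects_cons setIUr IHt rectI.
Qed.

Lemma mem_rects s x : rects s x <-> exists2 p, p \in s & rect p.1 p.2 x.
Proof.
elim: s => [|p s IHs]; first by rewrite rects_nil; split=> // -[].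
rewrite rects_cons; split=> [[rx|/IHs[q qs rx]]|[q]].
- by exists p; rewrite ?mem_head.
- by exists q; rewrite // inE qs orbT.
- by rewrite inE => /orP[/eqP ->|qs rx]; [left|right; apply/IHs; exists q].
Qed.

Definition slabs p q : seq (P * P) :=
  [seq (p.1, upd p.2 i (Order.min (p.2 i) (q.1 i))) | i <- enum 'I_d] ++
  [seq (upd p.1 i (Order.max (p.1 i) (q.2 i)), p.2) | i <- enum 'I_d].

Lemma rectD p q : rect p.1 p.2 `\` rect q.1 q.2 = rects (slabs p q).
Proof.
apply/seteqP; split=> x.
  move=> [px /existsNP[i /not_andP qxi]]; apply/mem_rects.
  case: (px i) => pxi1 pxi2.
  have [xq|qx] : x i < q.1 i \/ q.2 i <= x i.
    by case: qxi => /negP; rewrite -?ltNge -?leNgt; [left|right].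
  - exists (p.1, upd p.2 i (Order.min (p.2 i) (q.1 i))).
      by rewrite mem_cat map_f ?mem_enum.
    move=> j; have [->|ji] := eqVneq j i; last by rewrite /= upd_other //; apply: px.
    by rewrite /= upd_same lt_min pxi2 xq.
  - exists (upd p.1 i (Order.max (p.1 i) (q.2 i)), p.2).
      by rewrite mem_cat map_f ?mem_enum ?orbT.
    move=> j; have [->|ji] := eqVneq j i; last by rewrite /= upd_other //; apply: px.
    by rewrite /= upd_same ge_max pxi1 qx.
move/mem_rects => [r]; rewrite mem_cat => /orP[]/mapP[i _ ->] rx.
  have [pxi xq] : p.1 i <= x i < p.2 i /\ x i < q.1 i.
    by case: (rx i); rewrite /= upd_same lt_min => -> /andP[-> ->].
  split=> [j|/(_ i)[qx _]]; last by move: xq; rewrite ltNge qx.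
  have [->|ji] := eqVneq j i; first exact/andP.
  by have := rx j; rewrite /= upd_other.
have [pxi qx] : p.1 i <= x i < p.2 i /\ q.2 i <= x i.
  by case: (rx i); rewrite /= upd_same ge_max => /andP[-> ->] ->.
split=> [j|/(_ i)[_ xq]]; last by move: xq; rewrite ltNge qx.
have [->|ji] := eqVneq j i; first exact/andP.
by have := rx j; rewrite /= upd_other.
Qed.

Lemma multirect_rects s : multirect (rects s).
Proof. by apply/multirectP; exists s. Qed.

Lemma multirect0 : multirect (@set0 P).
Proof. by rewrite -(rects_nil R d); apply: multirect_rects. Qed.

Lemma multirect_rect a b : multirect (rect a b).
Proof. by apply/multirectP; exists [:: (a, b)]; rewrite rects_cons rects_nil setU0. Qed.

Lemma multirectU A B : multirect A -> multirect B -> multirect (A `|` B).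
Proof.
by move=> /multirectP[s ->] /multirectP[t ->]; rewrite -rects_cat; apply: multirect_rects.
Qed.

Lemma multirectI A B : multirect A -> multirect B -> multirect (A `&` B).
Proof.
move=> /multirectP[s ->] /multirectP[t ->]; elim: s => [|p s IHs].
  by rewrite rects_nil set0I; apply: multirect0.
rewrite rects_cons setIUl rect_setI_rects.
by apply: multirectU => //; apply: multirect_rects.
Qed.

Lemma multirectD A B : multirect A -> multirect B -> multirect (A `\` B).
Proof.
move=> /multirectP[s ->] /multirectP[t ->].
have rectD_rects p : multirect (rect p.1 p.2 `\` rects t).
  elim: t => [|q t IHt].
    by rewrite rects_nil setD0; apply: multirect_rect.
  by rewrite rects_cons setDUr rectD; apply: multirectI => //; apply: multirect_rects.
elim: s => [|p s IHs]; first by rewrite rects_nil set0D; apply: multirect0.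
by rewrite rects_cons setDUl; apply: multirectU.
Qed.

Section AdditiveFunction.
Variables (V : lmodType rat) (mu : set P -> V).
Hypothesis mu_additive : vol_additive mu.

Lemma additive_set0 : mu set0 = 0.
Proof.
have := mu_additive multirect0 multirect0 (setI0 _).
by rewrite setU0 -{1}[mu set0]addr0 => /addrI.
Qed.

Lemma additive_setUI A B : multirect A -> multirect B ->
  mu (A `|` B) + mu (A `&` B) = mu A + mu B.
Proof.
move=> mA mB; have mBA := multirectD mB mA; have mAB := multirectI mA mB.
have -> : A `|` B = A `|` (B `\` A) by rewrite setUDr setDv setD0.
rewrite mu_additive ?setDIK // -[in RHS](setUIDK B A) (setIC B A).
rewrite mu_additive //; last by rewrite setIAC setDIK set0I.
by rewrite addrAC addrA.
Qed.
End AdditiveFunction.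

(* Induction on the number of rectangles: [rect p `&` rects s] is again a union
   of [size s] rectangles. *)
Lemma additive_rects_eq (V : lmodType rat) (mu nu : set P -> V) :
  vol_additive mu -> vol_additive nu ->
  (forall a b, mu (rect a b) = nu (rect a b)) -> forall s, mu (rects s) = nu (rects s).
Proof.
move=> mu_add nu_add mu_nu s; move: {2}(size s) (erefl (size s)) => n.
elim: n s => [|n IHn] [|p s] //=.
  by rewrite rects_nil (additive_set0 mu_add) (additive_set0 nu_add).
case=> sn; have := additive_setUI mu_add (multirect_rect p.1 p.2) (multirect_rects s).
have := additive_setUI nu_add (multirect_rect p.1 p.2) (multirect_rects s).
rewrite rect_setI_rects (IHn s) // (IHn (map _ s)) ?size_map // mu_nu rects_cons => <-.
by move/addIr.
Qed.
End Uniqueness.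

Theorem mainTheorem13 (R : realType) (d : nat) (V : lmodType rat)
    (tens : ('I_d -> R) -> V) :
  (0 < d)%N -> is_tensor_power tens ->
  exists vol : set ('I_d -> R) -> V,
    [/\ vol_additive vol, vol_normalized tens vol &
      forall vol' : set ('I_d -> R) -> V,
        vol_additive vol' -> vol_normalized tens vol' ->
        forall A, multirect A -> vol' A = vol A].
Proof.
move=> _ [tens_ml _].
have vol_add := additive_vol tens.
have vol_norm : vol_normalized tens (vol tens).
  move=> a t t0; rewrite vol_rect //; last by move=> i; rewrite ltrDl.
  by congr tens; apply: funext => i; rewrite addrC addKr.
exists (vol tens); split => // vol' vol'_add vol'_norm A /multirectP[s ->].
apply: additive_rects_eq => // a b.
have [/forallP ab|/rect_eq0 ->] := boolP [forall i, a i < b i]; last first.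
  by rewrite (additive_set0 vol'_add) (additive_set0 vol_add).
have -> : b = (fun i => a i + (b i - a i)) by apply: funext => i; rewrite addrC subrK.
by rewrite vol'_norm ?vol_norm // => i; rewrite subr_gt0.
Qed.
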